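(* Let $n,m\ge 2$, $\phi\in(0,1]$, and let $p_M(n,m,\phi)$ be the probability that an $(n,m)$-election generated by the Mallows model with dispersion parameter $\phi$ (and any reference vote) is single-peaked. Then $$p_M(n,m,\phi)\ge\left(\frac{1+\phi(m-1)+\phi^2(m-2)(m-3)/2}{Z}\right)^n,\qquad Z=\prod_{j=1}^{m}\left(1+\phi+\cdots+\phi^{j-1}\right).$$
   Context: For total orders $V,W$ on a candidate set $C$, the Kendall tau distance $\kappa(V,W)$ is the number of unordered pairs $\{c,c'\}\subseteq C$ ordered differently by $V$ and $W$. Mallows model on a set $C$ of $m$ candidates with reference vote $V$ and dispersion $\phi\in(0,1]$: each of the $n$ votes of the election is drawn independently, a total order $W$ being chosen with probability $\phi^{\kappa(V,W)}/Z$, where $Z=\sum_{W}\phi^{\kappa(V,W)}=\prod_{j=1}^{m}(1+\phi+\cdots+\phi^{j-1})$. Given a total order $A$ on $C$, a vote contains a valley with respect to $A$ on $c_1,c_2,c_3$ if $c_2$ lies strictly between $c_1$ and $c_3$ in $A$ and the vote ranks $c_2$ below both $c_1$ and $c_3$. An election is single-peaked if there is a total order $A$ on $C$ such that no vote contains a valley with respect to $A$. *)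

From HB Require Import structures.
From mathcomp Require Import all_boot all_order all_algebra all_fingroup.
Set Implicit Arguments. Unset Strict Implicit. Unset Printing Implicit Defensive.
Import Order.TTheory GRing.Theory Num.Theory.

(* A total order (vote, reference vote, axis) on the
   candidates is encoded by a permutation W : {perm 'I_m}, where W c is the
   position of candidate c (position 0 = top of a vote / left end of an axis). *)

Definition kendall (m : nat) (V W : {perm 'I_m}) : nat :=
  #|[set p : 'I_m * 'I_m |
      ((p.1 < p.2)%N && ((V p.1 < V p.2)%N != (W p.1 < W p.2)%N))]|.

Definition strictly_between (m : nat) (A : {perm 'I_m}) (c1 c2 c3 : 'I_m) : bool :=
  ((A c1 < A c2)%N && (A c2 < A c3)%N) || ((A c3 < A c2)%N && (A c2 < A c1)%N).

Definition valley (m : nat) (A W : {perm 'I_m}) (c1 c2 c3 : 'I_m) : bool :=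
  strictly_between A c1 c2 c3 && (W c1 < W c2)%N && (W c3 < W c2)%N.

Definition election (n m : nat) := {ffun 'I_n -> {perm 'I_m}}.

Definition single_peaked (n m : nat) (E : election n m) : bool :=
  [exists A : {perm 'I_m},
     [forall i : 'I_n, forall c1 : 'I_m, forall c2 : 'I_m, forall c3 : 'I_m,
        ~~ valley A (E i) c1 c2 c3]].

Local Open Scope ring_scope.

Definition mallows_Z (R : pzRingType) (m : nat) (phi : R) (V : {perm 'I_m}) : R :=
  \sum_(W : {perm 'I_m}) phi ^+ kendall V W.

Definition mallows_prob (R : fieldType) (m : nat) (phi : R) (V W : {perm 'I_m}) : R :=
  phi ^+ kendall V W / mallows_Z phi V.

Definition p_M (R : fieldType) (n m : nat) (phi : R) (V : {perm 'I_m}) : R :=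
  \sum_(E : election n m | single_peaked E) \prod_(i < n) mallows_prob phi V (E i).

From HB Require Import structures.
From mathcomp Require Import all_boot all_order all_algebra all_fingroup zify.
Import Order.TTheory GRing.Theory Num.Theory.
Set Implicit Arguments. Unset Strict Implicit. Unset Printing Implicit Defensive.

(* Take as axis the zigzag arrangement of the reference vote V: its ranks 0, 1,
   2, ... are placed alternately right and left of the centre.  A vote obtained
   from V by exchanging disjoint pairs of neighbouring candidates is then
   single-peaked for this axis and lies at Kendall distance at most the number
   of exchanged pairs from V.  There is one such vote with no exchange, m - 1
   with one and at least C(m-2, 2) with two, so when phi <= 1 a single vote is
   single-peaked for the axis with probability at least
   (1 + phi (m-1) + phi^2 C(m-2, 2)) / Z_V, where Z_V is the normalising sum of
   the model.  The Lehmer code (c |-> number of candidates above c in V but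
   below c in W) is an injection from votes into sequences bounded by the ranks
   in V that turns phi^kendall into a product, whence Z_V <= Z.  Elections all
   of whose votes are single-peaked for the one axis give the n-th power. *)

Lemma card_set_sum (T : finType) (P : pred T) : #|[set x | P x]| = \sum_x P x.
Proof. by rewrite -sum1dep_card big_mkcond; apply: eq_bigr => x _; case: (P x). Qed.

Lemma card_ord_lt m v : v <= m -> #|[set x : 'I_m | x < v]| = v.
Proof.
move=> le_vm; have widen_inj : injective (widen_ord le_vm).
  by move=> i j /(congr1 val) /= /val_inj.
rewrite -[RHS]card_ord -(card_imset _ widen_inj).
apply: eq_card => x; rewrite inE; apply/idP/imsetP => [lt_xv | [i _ ->] //=].
by exists (Ordinal lt_xv) => //; apply: val_inj.
Qed.

Lemma card_above_ltn m (U : pred 'I_m) (a b : 'I_m) : U b -> a < b ->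
  #|[set u | U u && (b < u)]| < #|[set u | U u && (a < u)]|.
Proof.
move=> Ub lt_ab; apply: proper_card; apply/properP; split.
  by apply/subsetP => u; rewrite !inE => /andP[-> /(ltn_trans lt_ab)].
by exists b; rewrite !inE ?Ub ?lt_ab ?ltnn.
Qed.

Section LehmerCode.

Variables (m : nat) (V : {perm 'I_m}).

Definition lehmer (W : {perm 'I_m}) (c : 'I_m) : nat :=
  #|[set d | (V d < V c) && (W c < W d)]|.

Lemma kendall_lehmer W : kendall V W = \sum_c lehmer W c.
Proof.
rewrite /kendall card_set_sum.
have -> : \sum_c lehmer W c = \sum_c \sum_d ((V d < V c) && (W c < W d) : nat).
  by apply: eq_bigr => c _; rewrite /lehmer card_set_sum.
rewrite pair_bigA /=.
set Q := fun p : 'I_m * 'I_m => (V p.2 < V p.1) && (W p.1 < W p.2).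
have -> : \sum_p (Q p : nat) =
    \sum_(p : 'I_m * 'I_m) (((p.1 < p.2) && Q p) + ((p.2 < p.1) && Q p))%N.
  apply: eq_bigr => -[c d] _; rewrite /Q /=.
  by case: (ltngtP c d) => [||/val_inj->]; rewrite /= ?addn0 ?ltnn.
rewrite big_split /= [X in (_ + X)%N](reindex_inj (h := fun p => (p.2, p.1)));
  last by move=> [a b] [c d] /= [-> ->].
rewrite -big_split /=; apply: eq_bigr => -[c d] _; rewrite /Q /=.
case: (ltngtP c d) => lt_cd //=.
have : (V c : nat) != V d by rewrite (inj_eq val_inj) (inj_eq perm_inj) neq_ltn lt_cd.
have : (W c : nat) != W d by rewrite (inj_eq val_inj) (inj_eq perm_inj) neq_ltn lt_cd.
lia.
Qed.

Lemma kendall_refl : kendall V V = 0.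
Proof. by apply/eqP; rewrite cards_eq0; apply/eqP/setP => p; rewrite !inE eqxx andbF. Qed.

Lemma lehmer_le W c : lehmer W c <= V c.
Proof.
apply: (@leq_trans #|V @^-1: [set x : 'I_m | x < V c]|).
  by apply: subset_leq_card; apply/subsetP => d; rewrite !inE => /andP[].
by rewrite card_preimset ?card_ord_lt //; [exact: ltnW | exact: perm_inj].
Qed.

Lemma lehmer_lt W c : lehmer W c < m.
Proof. exact: leq_ltn_trans (lehmer_le W c) (ltn_ord _). Qed.

Lemma lehmer_compl W c :
  lehmer W c = #|[set u | (u \notin W @: [set d | V c < V d]) && (W c < u)]|.
Proof.
rewrite /lehmer -(card_preimset _ (@perm_inj _ W^-1)).
apply: eq_card => u; rewrite !inE permKV.
rewrite -[u in u \notin _](permKV W) mem_imset ?inE -?leqNgt; last exact: perm_inj.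
rewrite [in RHS]leq_eqVlt; case: eqP => [/ord_inj/perm_inj <- | _] //=.
by rewrite permKV !ltnn.
Qed.

Lemma lehmer_inj W W' : (forall c, lehmer W c = lehmer W' c) -> W = W'.
Proof.
move=> eq_lehmer; apply/permP => c.
have agree_above c0 : (forall d, V c0 < V d -> W d = W' d) -> W c0 = W' c0.
  move=> agree; set D := [set d | V c0 < V d].
  have eq_imD : W @: D = W' @: D by apply: eq_in_imset => d; rewrite inE => /agree.
  have notin_imD (X : {perm 'I_m}) : X c0 \notin X @: D.
    by rewrite mem_imset ?inE ?ltnn //; apply: perm_inj.
  set U := fun u => u \notin W @: D.
  have := eq_lehmer c0; rewrite !lehmer_compl -/D -eq_imD.
  have UW' : U (W' c0) by rewrite /U eq_imD notin_imD.
  case: (ltngtP (W c0) (W' c0)) => [lt_W | lt_W | /val_inj //] eq_card.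
  - by have := card_above_ltn (U := U) UW' lt_W; rewrite eq_card ltnn.
  - by have := card_above_ltn (U := U) (notin_imD W) lt_W; rewrite eq_card ltnn.
suff agree_all k c0 : m - V c0 <= k -> W c0 = W' c0.
  by apply: (agree_all m); rewrite leq_subr.
elim: k c0 => [|k IHk] c0 bound_c0; first by move: bound_c0 (ltn_ord (V c0)); lia.
by apply: agree_above => d lt_c0d; apply: IHk; move: bound_c0 (ltn_ord (V d)); lia.
Qed.

End LehmerCode.

Local Open Scope ring_scope.

Lemma ler_sum_inj (R : numDomainType) (I J : finType) (P : pred I) (Q : pred J)
    (h : I -> J) (F : J -> R) :
  injective h -> (forall i, P i -> Q (h i)) -> (forall j, Q j -> 0 <= F j) ->
  \sum_(i | P i) F (h i) <= \sum_(j | Q j) F j.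
Proof.
move=> h_inj PQ F_ge0.
rewrite -(big_imset _ (in2W h_inj)) /= [X in _ <= X](bigID (mem (h @: P))) /=.
have -> : \sum_(j | Q j && (j \in h @: P)) F j = \sum_(j in h @: P) F j.
  by apply: eq_bigl => j; case: imsetP => [[i Pi ->] | _]; rewrite ?andbT ?andbF ?PQ.
by rewrite lerDl sumr_ge0 // => j /andP[/F_ge0].
Qed.

Lemma mallows_Z_le_prod (R : numDomainType) m (phi : R) (V : {perm 'I_m}) : 0 <= phi ->
  mallows_Z phi V <= \prod_(1 <= j < m.+1) \sum_(0 <= k < j) phi ^+ k.
Proof.
move=> phi_ge0.
pose F c (j : 'I_m) := if (j <= V c)%N then phi ^+ j else 0.
pose code W := [ffun c => Ordinal (lehmer_lt V W c)].
have code_inj : injective code.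
  move=> W W' /ffunP eq_code; apply: (@lehmer_inj _ V) => c.
  by have := eq_code c; rewrite !ffunE => -[].
have F_code W : phi ^+ kendall V W = \prod_c F c (code W c).
  by rewrite kendall_lehmer -prodrXr; apply: eq_bigr => c _; rewrite /F ffunE /= lehmer_le.
pose G (f : {ffun 'I_m -> 'I_m}) := \prod_c F c (f c).
have -> : \prod_(1 <= j < m.+1) \sum_(0 <= k < j) phi ^+ k = \sum_f G f.
  rewrite /G -bigA_distr_bigA /= big_add1 /= big_mkord (reindex_inj (@perm_inj _ V)) /=.
  apply: eq_bigr => c _.
  by rewrite /F -big_mkcond -(big_ord_widen _ _ (ltn_ord (V c))) big_mkord.
rewrite /mallows_Z (eq_bigr _ (fun W _ => F_code W)).
apply: (ler_sum_inj (F := G) code_inj) => // f _.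
by apply: prodr_ge0 => c _; rewrite /F; case: ifP => // _; apply: exprn_ge0.
Qed.

Local Close Scope ring_scope.

Definition zigzag (m x : nat) : nat :=
  if odd x then m.-1./2 + x.+1./2 else m.-1./2 - x./2.

Lemma zigzag_lt m x : x < m -> zigzag m x < m.
Proof. by rewrite /zigzag; case: ifP => /= _; lia. Qed.

Lemma zigzag_inj m x y : x < m -> y < m -> zigzag m x = zigzag m y -> x = y.
Proof. by rewrite /zigzag; case: ifP => ?; case: ifP => ? /=; lia. Qed.

(* Ranks up to [x] fill a block of the axis with [x] at one end and [x.+1]
   just beyond the other end, so the one of [y], [z] lying beyond [x] has rank
   at least [x.+2]. *)
Lemma zigzag_between m x y z : x < m -> y < m -> z < m ->
  zigzag m y < zigzag m x -> zigzag m x < zigzag m z -> x.+2 <= y \/ x.+2 <= z.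
Proof. by rewrite /zigzag; case: ifP => ?; case: ifP => ?; case: ifP => ? /=; lia. Qed.

Section Axis.

Variable m : nat.

Definition zigzag_ord (x : 'I_m) : 'I_m := Ordinal (zigzag_lt (ltn_ord x)).

Lemma zigzag_ord_inj : injective zigzag_ord.
Proof. by move=> x y /(congr1 val) /zigzag_inj eq_xy; apply/val_inj/eq_xy. Qed.

Definition axis (V : {perm 'I_m}) : {perm 'I_m} := (V * perm zigzag_ord_inj)%g.

Definition single_peaked_wrt (A W : {perm 'I_m}) : bool :=
  [forall c1, forall c2, forall c3, ~~ valley A W c1 c2 c3].

(* The permutations of positions moving no position by more than one are the
   products of disjoint transpositions of neighbours; [nswaps t] counts these
   transpositions through the member of each pair that moves up. *)
Definition adjacent_perm (t : {perm 'I_m}) : bool :=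
  [forall x, (t x <= x.+1) && (x <= (t x).+1)].

Definition nswaps (t : {perm 'I_m}) : nat := #|[set x | (t x).+1 == x]|.

Lemma single_peaked_adjacent V t :
  adjacent_perm t -> single_peaked_wrt (axis V) (V * t)%g.
Proof.
move=> /forallP adj_t; apply/forallP => c1; apply/forallP => c2; apply/forallP => c3.
apply/negP; rewrite /valley /strictly_between /axis !permM !permE /=.
have := adj_t (V c1); have := adj_t (V c2); have := adj_t (V c3).
have := ltn_ord (V c1); have := ltn_ord (V c2); have := ltn_ord (V c3).
move: (V c1) (V c2) (V c3) => x1 x2 x3 lt3 lt2 lt1.
move=> /andP[? ?] /andP[? ?] /andP[? ?] /andP[/andP[between ?] ?].
(* The middle candidate would have to be at least two ranks below an outer one
   in [V], but [t] moves ranks by at most one. *)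
case/orP: between => /andP[lt_a lt_b].
- by case: (zigzag_between lt2 lt1 lt3 lt_a lt_b) => ?; lia.
- by case: (zigzag_between lt2 lt3 lt1 lt_a lt_b) => ?; lia.
Qed.

Lemma kendall_adjacent_le V t : adjacent_perm t -> kendall V (V * t)%g <= nswaps t.
Proof.
move=> /forallP adj_t.
rewrite kendall_lehmer /nswaps card_set_sum [X in _ <= X](reindex_inj (@perm_inj _ V)) /=.
apply: leq_sum => c _; rewrite /lehmer.
set S := [set d | _].
have inS d : d \in S -> ((V d).+1 = V c) /\ ((t (V c)).+1 = V c).
  rewrite inE !permM => /andP[? ?].
  by have := adj_t (V c); have := adj_t (V d); move=> /andP[? ?] /andP[? ?]; lia.
case: (boolP ((t (V c)).+1 == V c)) => /= [_ | not_down].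
  apply/card_le1_eqP => d d' /inS[eq_d _] /inS[eq_d' _].
  by apply: (@perm_inj _ V); apply: ord_inj; lia.
rewrite leqn0 cards_eq0; apply/eqP/setP => d; rewrite in_set0.
by apply/negbTE/negP => /inS[_ eq_down]; rewrite eq_down eqxx in not_down.
Qed.

End Axis.

Section AdjacentSwaps.

Variable n : nat.

Definition swap_at (i : nat) : {perm 'I_n.+1} := tperm (inord i) (inord i.+1).

Definition double_swap (a b : nat) : {perm 'I_n.+1} := (swap_at a * swap_at b)%g.

Lemma swap_at_cases i (x : 'I_n.+1) : i < n ->
  (x = i :> nat /\ swap_at i x = i.+1 :> nat) \/
  (x = i.+1 :> nat /\ swap_at i x = i :> nat) \/
  (x <> i :> nat /\ x <> i.+1 :> nat /\ swap_at i x = x :> nat).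
Proof.
move=> lt_in; rewrite /swap_at.
have val_i : (inord i : 'I_n.+1) = i :> nat by rewrite inordK // ltnW.
have val_i1 : (inord i.+1 : 'I_n.+1) = i.+1 :> nat by rewrite inordK.
case: tpermP => [->|->|ne_i ne_i1]; [by left | by right; left | right; right].
by split; [|split] => // eq_x; [apply: ne_i | apply: ne_i1];
  apply: val_inj; rewrite /= ?val_i ?val_i1.
Qed.

Lemma adjacent_swap_at i : i < n -> adjacent_perm (swap_at i).
Proof. by move=> lt_in; apply/forallP => x; have := swap_at_cases x lt_in; lia. Qed.

Lemma swap_at_down i (x : 'I_n.+1) : i < n -> ((swap_at i x).+1 == x) = (x == i.+1 :> nat).
Proof. by move=> lt_in; have := swap_at_cases x lt_in; lia. Qed.

Lemma nswaps_swap_at i : i < n -> nswaps (swap_at i) = 1.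
Proof.
move=> lt_in; rewrite /nswaps -(cards1 (inord i.+1 : 'I_n.+1)).
by apply: eq_card => x; rewrite !inE swap_at_down // -(inj_eq val_inj) /= inordK.
Qed.

Lemma double_swap_down a b (x : 'I_n.+1) : a.+1 < b -> b < n ->
  ((double_swap a b x).+1 == x) = (x == a.+1 :> nat) || (x == b.+1 :> nat).
Proof.
move=> lt_ab lt_bn; rewrite /double_swap permM.
have := swap_at_cases x (ltn_trans (ltnW lt_ab) lt_bn).
by have := swap_at_cases (swap_at a x) lt_bn; lia.
Qed.

Lemma adjacent_double_swap a b : a.+1 < b -> b < n -> adjacent_perm (double_swap a b).
Proof.
move=> lt_ab lt_bn; apply/forallP => x; rewrite /double_swap permM.
have := swap_at_cases x (ltn_trans (ltnW lt_ab) lt_bn).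
by have := swap_at_cases (swap_at a x) lt_bn; lia.
Qed.

Lemma nswaps_double_swap a b : a.+1 < b -> b < n -> nswaps (double_swap a b) = 2.
Proof.
move=> lt_ab lt_bn; have neq : (inord a.+1 : 'I_n.+1) != inord b.+1.
  by rewrite -(inj_eq val_inj) /= !inordK //; lia.
rewrite /nswaps -[2]/((true : nat).+1) -neq -cards2; apply: eq_card => x.
by rewrite !inE double_swap_down // -!(inj_eq val_inj) /= !inordK //; lia.
Qed.

End AdjacentSwaps.

Lemma card_ltn_pairs k : #|[set p : 'I_k * 'I_k | p.1 < p.2]| = 'C(k, 2).
Proof.
rewrite card_set_sum -(pair_bigA _ (fun a b : 'I_k => nat_of_bool (a < b))) /=.
rewrite exchange_big /= -bin2_sum big_mkord; apply: eq_bigr => b _.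
by rewrite -card_set_sum card_ord_lt // ltnW.
Qed.

Lemma card_adjacent_nswaps1 n :
  n <= #|[set t : {perm 'I_n.+1} | adjacent_perm t && (nswaps t == 1)]|.
Proof.
have swap_inj : injective (fun i : 'I_n => swap_at n i).
  move=> i j eq_ij; apply: val_inj.
  have := swap_at_down (inord i.+1 : 'I_n.+1) (ltn_ord i).
  by rewrite eq_ij swap_at_down // inordK ?ltnS // eqxx eqSS => /eqP.
rewrite -[leqLHS]card_ord -(card_imset _ swap_inj); apply: subset_leq_card.
by apply/subsetP => _ /imsetP[i _ ->]; rewrite inE adjacent_swap_at ?nswaps_swap_at.
Qed.

Lemma card_adjacent_nswaps2 n :
  'C(n.-1, 2) <= #|[set t : {perm 'I_n.+1} | adjacent_perm t && (nswaps t == 2)]|.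
Proof.
set I := [set p : 'I_n.-1 * 'I_n.-1 | p.1 < p.2].
pose swaps (p : 'I_n.-1 * 'I_n.-1) := double_swap n p.1 p.2.+1.
have boundsI p : p \in I -> p.1.+1 < p.2.+1 /\ p.2.+1 < n.
  by case: p => a b; rewrite inE /= => lt_ab; have := ltn_ord b; lia.
have swaps_inj : {in I &, injective swaps}.
  move=> [a b] [c d] /boundsI[/= ? ?] /boundsI[/= ? ?] eq_swaps.
  have down x : ((swaps (a, b) x).+1 == x) = ((swaps (c, d) x).+1 == x) by rewrite eq_swaps.
  have := down (inord a.+1); have := down (inord b.+2).
  have := down (inord c.+1); have := down (inord d.+2).
  rewrite /swaps /= !double_swap_down // !inordK; try lia.
  by move=> *; congr (_, _); apply: ord_inj; lia.
rewrite -card_ltn_pairs -/I -(card_in_imset swaps_inj); apply: subset_leq_card.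
apply/subsetP => _ /imsetP[p /boundsI[? ?] ->].
by rewrite inE adjacent_double_swap ?nswaps_double_swap.
Qed.

Local Open Scope ring_scope.

Lemma sum_adjacent_le_single_peaked (R : numDomainType) m (phi : R) (V : {perm 'I_m}) :
    0 <= phi -> phi <= 1 ->
  \sum_(t : {perm 'I_m} | adjacent_perm t) phi ^+ nswaps t <=
  \sum_(W | single_peaked_wrt (axis V) W) phi ^+ kendall V W.
Proof.
move=> phi_ge0 phi_le1.
apply: (@le_trans _ _ (\sum_(t | adjacent_perm t) phi ^+ kendall V (V * t)%g)).
  by apply: ler_sum => t adj_t; apply: ler_wiXn2l => //; apply: kendall_adjacent_le.
apply: (ler_sum_inj (F := fun W => phi ^+ kendall V W) (@mulgI _ V)) => [t|W _].
  exact: single_peaked_adjacent.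
exact: exprn_ge0.
Qed.

Lemma sum_adjacent_ge (R : numDomainType) n (phi : R) : 0 <= phi ->
  1 + phi * n%:R + phi ^+ 2 * 'C(n.-1, 2)%:R <=
  \sum_(t : {perm 'I_n.+1} | adjacent_perm t) phi ^+ nswaps t.
Proof.
move=> phi_ge0.
pose N j := #|[set t : {perm 'I_n.+1} | adjacent_perm t && (nswaps t == j)]|.
have N0_ge1 : (1 <= N 0)%N.
  apply/card_gt0P; exists 1%g; rewrite inE; apply/andP; split.
    by apply/forallP => x; rewrite perm1 leqnSn.
  by rewrite /nswaps cards_eq0; apply/eqP/setP => x; rewrite !inE perm1 gtn_eqF.
apply: (@le_trans _ _ (\sum_(j < 3) (N j)%:R * phi ^+ j)).
  rewrite !big_ord_recr big_ord0 /= add0r expr0 mulr1 expr1 ![_%:R * _]mulrC.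
  rewrite !lerD ?ler1n ?ler_wpM2l ?exprn_ge0 ?ler_nat //.
    exact: card_adjacent_nswaps1.
  exact: card_adjacent_nswaps2.
have N_sum j : (N j)%:R * phi ^+ j =
    \sum_(t : {perm 'I_n.+1} | adjacent_perm t) (nswaps t == j)%:R * phi ^+ j.
  rewrite /N -sum1dep_card big_mkcondr natr_sum mulr_suml.
  by apply: eq_bigr => t _; case: eqP.
under eq_bigr do rewrite N_sum.
rewrite exchange_big /=; apply: ler_sum => t _.
rewrite !big_ord_recr big_ord0 /=.
by case: (nswaps t) => [|[|[|d]]]; rewrite /= ?mul1r ?mul0r ?addr0 ?add0r ?exprn_ge0.
Qed.

Lemma mallows_Z_ge1 (R : numDomainType) m (phi : R) (V : {perm 'I_m}) : 0 <= phi ->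
  1 <= mallows_Z phi V.
Proof.
move=> phi_ge0; rewrite /mallows_Z (bigD1 V) //= kendall_refl expr0 lerDl.
by apply: sumr_ge0 => W _; apply: exprn_ge0.
Qed.

Lemma mallows_prob_ge0 (R : numFieldType) m (phi : R) (V W : {perm 'I_m}) : 0 <= phi ->
  0 <= mallows_prob phi V W.
Proof.
move=> phi_ge0; rewrite divr_ge0 ?exprn_ge0 //.
exact: le_trans ler01 (mallows_Z_ge1 V phi_ge0).
Qed.

Lemma p_M_ge_single_peaked_wrt (R : numFieldType) n m (phi : R) (V A : {perm 'I_m}) :
    0 <= phi ->
  (\sum_(W | single_peaked_wrt A W) mallows_prob phi V W) ^+ n <= p_M n phi V.
Proof.
move=> phi_ge0.
pose F (i : 'I_n) W := if single_peaked_wrt A W then mallows_prob phi V W else 0.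
have -> : (\sum_(W | single_peaked_wrt A W) mallows_prob phi V W) ^+ n =
    \prod_(i < n) \sum_W F i W.
  by rewrite -[in LHS](card_ord n) -prodr_const; apply: eq_bigr => i _; rewrite big_mkcond.
rewrite bigA_distr_bigA /= /p_M [leRHS]big_mkcond /=; apply: ler_sum => E _.
case: (boolP [forall i, single_peaked_wrt A (E i)]) => [/forallP all_sp | /forallPn[i not_sp]].
  have -> : single_peaked E by apply/existsP; exists A; apply/forallP => i; exact: all_sp.
  by rewrite (eq_bigr (fun i => mallows_prob phi V (E i))) // => i _; rewrite /F all_sp.
rewrite (bigD1 i) //= /F (negbTE not_sp) mul0r.
by case: ifP => _ //; apply: prodr_ge0 => j _; apply: mallows_prob_ge0.
Qed.

Theorem mainTheorem12 (R : realFieldType) (n m : nat) (phi : R)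
    (hn : (2 <= n)%N) (hm : (2 <= m)%N) (hphi0 : 0 < phi) (hphi1 : phi <= 1)
    (V : {perm 'I_m}) :
  let Z := \prod_(1 <= j < m.+1) \sum_(0 <= k < j) phi ^+ k in
  ((1 + phi * (m - 1)%:R + phi ^+ 2 * ((m - 2) * (m - 3))%:R / 2) / Z) ^+ n
    <= p_M n phi V.
Proof.
case: m hm V => [|k] // _ V; cbv zeta.
have phi_ge0 : 0 <= phi := ltW hphi0.
have -> : 1 + phi * (k.+1 - 1)%:R + phi ^+ 2 * ((k.+1 - 2) * (k.+1 - 3))%:R / 2 =
          1 + phi * k%:R + phi ^+ 2 * 'C(k.-1, 2)%:R.
  have -> : ((k.+1 - 2) * (k.+1 - 3) = 'C(k.-1, 2) * 2)%N.
    by rewrite [RHS]mulnC -mul_bin_diag bin1; congr (_ * _)%N; lia.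
  by rewrite subn1 natrM mulrA mulfK // pnatr_eq0.
apply: le_trans (p_M_ge_single_peaked_wrt n V (axis V) phi_ge0).
have Zm_gt0 : 0 < mallows_Z phi V := lt_le_trans ltr01 (mallows_Z_ge1 V phi_ge0).
have Zm_le := mallows_Z_le_prod V phi_ge0.
have numer_le := le_trans (sum_adjacent_ge k phi_ge0)
  (sum_adjacent_le_single_peaked V phi_ge0 hphi1).
have numer_ge0 : 0 <= 1 + phi * k%:R + phi ^+ 2 * 'C(k.-1, 2)%:R.
  by rewrite !addr_ge0 ?mulr_ge0 ?exprn_ge0.
rewrite /mallows_prob -mulr_suml; apply: lerXn2r; rewrite ?nnegrE.
- by rewrite divr_ge0 // ltW // (lt_le_trans Zm_gt0).
- by rewrite divr_ge0 ?(ltW Zm_gt0) ?sumr_ge0 // => W _; apply: exprn_ge0.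
- apply: ler_pM => //; first by rewrite invr_ge0 ltW // (lt_le_trans Zm_gt0).
  by rewrite lef_pV2 ?posrE // (lt_le_trans Zm_gt0).
Qed.
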